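(* Let $n$ be a positive integer with $n > 6\log 10$, and let $\Delta > 0$. Let $q$ be the random score taking values in $\{0,1,\dots,n\}$ with $\Pr[q = i] = \frac{\binom{n}{i}\exp\left(\frac{i\epsilon}{2\Delta}\right)}{\left(1+\exp\left(\frac{\epsilon}{2\Delta}\right)\right)^n}$, and let the number of flipped labels be $n - q$. If $\epsilon \ge 2\Delta\log\frac{1+2\sqrt{(1.5\log 10)/n}}{1-2\sqrt{(1.5\log 10)/n}}$, then $\Pr[n - q \le n/2] \ge 0.999$, i.e. with probability at least $99.9\%$ the flipping rate is at most $1/2$.
   Context: This is the distribution of the Hamming-agreement score $q(D,D^* ) = n - |\{i : y_i \ne y^*_i\}|$ when an exponential mechanism with privacy budget $\epsilon$ and sensitivity $\Delta$ outputs a binary label vector $D$ for a true label vector $D^*$ of length $n$, each output $D$ having probability proportional to $\exp(q(D,D^* )\epsilon/(2\Delta))$; $n-q$ is the number of labels changed. $\log$ denotes the natural logarithm. *)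

From Stdlib Require Import Reals Lra Lia.
Open Scope R_scope.

Definition score_pmf (n : nat) (eps Delta : R) (i : nat) : R :=
  Binomial.C n i * exp (INR i * eps / (2 * Delta))
  / (1 + exp (eps / (2 * Delta))) ^ n.

Definition prob_flip_le_half (n : nat) (eps Delta : R) : R :=
  sum_f_R0 (fun i => if Rle_dec (INR n - INR i) (INR n / 2)
                     then score_pmf n eps Delta i else 0) n.

(** With [E = exp (eps / (2 Delta))] the score [q] is binomial with success
    probability [E / (1 + E)].  For [i < n/2] we have [E ^ i <= sqrt E ^ n], so
    the lower tail [Pr[q < n/2]] is at most [(2 sqrt E / (1 + E)) ^ n] (the
    Chernoff bound).  Writing [s = 2 sqrt (1.5 ln 10 / n)], the hypothesis on
    [eps] reads [E >= (1 + s) / (1 - s)], which gives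
    [(2 sqrt E / (1 + E)) ^ 2 <= 1 - s ^ 2 <= exp (- s ^ 2)], hence a tail of at
    most [exp (- n s ^ 2 / 2) = 10 ^ -3]. *)

From Stdlib Require Import Reals Lra Lia Psatz.
Open Scope R_scope.

Lemma exp_mul_INR (n : nat) (a : R) : exp (INR n * a) = exp a ^ n.
Proof.
  rewrite <- (ln_exp a) at 1.
  rewrite <- ln_pow by apply exp_pos.
  apply exp_ln, pow_lt, exp_pos.
Qed.

Lemma exp_ge_of_ln_le (x a : R) : 0 < x -> ln x <= a -> x <= exp a.
Proof.
  intros Hx Hle. rewrite <- (exp_ln x) by exact Hx.
  destruct (Rle_lt_or_eq_dec _ _ Hle) as [Hlt | ->].
  - left; apply exp_increasing, Hlt.
  - right; reflexivity.
Qed.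

Lemma pow_one_minus_le_exp (x : R) (n : nat) :
  x <= 1 -> (1 - x) ^ n <= exp (- (INR n * x)).
Proof.
  intros Hx.
  replace (- (INR n * x)) with (INR n * - x) by ring.
  rewrite exp_mul_INR.
  apply pow_incr. pose proof (exp_ineq1_le (- x)). lra.
Qed.

Lemma Binomial_C_ge0 (n i : nat) : 0 <= Binomial.C n i.
Proof.
  unfold Binomial.C. apply Rmult_le_pos; [apply pos_INR |].
  left; apply Rinv_0_lt_compat, Rmult_lt_0_compat; apply INR_fact_lt_0.
Qed.

Lemma sum_binomial_pow (n : nat) (x : R) :
  sum_f_R0 (fun i => Binomial.C n i * x ^ i) n = (1 + x) ^ n.
Proof.
  rewrite Rplus_comm, binomial.
  apply sum_eq; intros i _. rewrite pow1; ring.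
Qed.

Lemma score_pmf_exp (n : nat) (eps Delta : R) (i : nat) :
  score_pmf n eps Delta i =
  Binomial.C n i * exp (eps / (2 * Delta)) ^ i / (1 + exp (eps / (2 * Delta))) ^ n.
Proof.
  unfold score_pmf. rewrite <- exp_mul_INR. unfold Rdiv. rewrite (Rmult_assoc (INR i)).
  reflexivity.
Qed.

Lemma sum_score_pmf (n : nat) (eps Delta : R) :
  sum_f_R0 (score_pmf n eps Delta) n = 1.
Proof.
  set (E := exp (eps / (2 * Delta))).
  assert (HE : 0 < 1 + E) by (pose proof (exp_pos (eps / (2 * Delta))); unfold E; lra).
  transitivity (sum_f_R0 (fun i => Binomial.C n i * E ^ i) n * / (1 + E) ^ n).
  - rewrite Rmult_comm, scal_sum. apply sum_eq; intros i _.
    rewrite score_pmf_exp. reflexivity.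
  - rewrite sum_binomial_pow. apply Rinv_r, pow_nonzero. lra.
Qed.

(* [2 sqrt (p (1 - p))] for [p = E / (1 + E)]. *)
Definition chernoff_base (E : R) : R := 2 * sqrt E / (1 + E).

Lemma pow_le_sqrt_pow (E : R) (i n : nat) :
  1 <= E -> (2 * i <= n)%nat -> E ^ i <= sqrt E ^ n.
Proof.
  intros HE Hi.
  rewrite <- (pow2_sqrt E) at 1 by lra. rewrite <- pow_mult.
  apply Rle_pow; [| lia].
  rewrite <- sqrt_1. apply sqrt_le_1_alt, HE.
Qed.

Lemma prob_flip_le_half_ge (n : nat) (eps Delta : R) :
  1 <= exp (eps / (2 * Delta)) ->
  1 - chernoff_base (exp (eps / (2 * Delta))) ^ n <= prob_flip_le_half n eps Delta.
Proof.
  set (E := exp (eps / (2 * Delta))). intros HE.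
  assert (HD : 0 < (1 + E) ^ n) by (apply pow_lt; lra).
  set (tail_bound := fun i => Binomial.C n i * sqrt E ^ n / (1 + E) ^ n).
  assert (Htail : sum_f_R0 tail_bound n = chernoff_base E ^ n).
  { transitivity (sum_f_R0 (fun i => Binomial.C n i * 1 ^ i) n * (sqrt E ^ n / (1 + E) ^ n)).
    - rewrite Rmult_comm, scal_sum. apply sum_eq; intros i _.
      unfold tail_bound. rewrite pow1. unfold Rdiv. ring.
    - rewrite sum_binomial_pow. unfold chernoff_base, Rdiv.
      rewrite !Rpow_mult_distr, pow_inv. replace (1 + 1) with 2 by ring. ring. }
  rewrite <- (sum_score_pmf n eps Delta), <- Htail, <- minus_sum.
  apply sum_Rle; intros i _.
  assert (Hbound : 0 <= tail_bound i).
  { apply Rmult_le_pos; [apply Rmult_le_pos; [apply Binomial_C_ge0 | apply pow_le, sqrt_pos] |].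
    left; apply Rinv_0_lt_compat, HD. }
  destruct (Rle_dec (INR n - INR i) (INR n / 2)) as [_ | Hlow]; [lra |].
  assert (H2i : (2 * i <= n)%nat).
  { apply INR_le. rewrite mult_INR. simpl. lra. }
  rewrite score_pmf_exp. fold E. unfold tail_bound, Rdiv.
  apply Rle_minus, Rmult_le_compat_r; [left; apply Rinv_0_lt_compat, HD |].
  apply Rmult_le_compat_l; [apply Binomial_C_ge0 | apply pow_le_sqrt_pow; assumption].
Qed.

Lemma one_le_of_ratio_le (s E : R) : 0 <= s < 1 -> (1 + s) / (1 - s) <= E -> 1 <= E.
Proof.
  intros Hs HE.
  assert (1 <= (1 + s) / (1 - s)).
  { apply Rmult_le_reg_r with (1 - s); [lra |]. field_simplify; lra. }
  lra.
Qed.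

Lemma chernoff_base_sqr_le (s E : R) :
  0 <= s < 1 -> (1 + s) / (1 - s) <= E -> chernoff_base E ^ 2 <= 1 - s ^ 2.
Proof.
  intros Hs HE.
  assert (HE' : 1 + s <= (1 - s) * E).
  { apply Rmult_le_compat_l with (r := 1 - s) in HE; [| lra].
    replace ((1 - s) * ((1 + s) / (1 - s))) with (1 + s) in HE by (field; lra).
    exact HE. }
  pose proof (one_le_of_ratio_le s E Hs HE).
  unfold chernoff_base, Rdiv.
  rewrite !Rpow_mult_distr, pow2_sqrt, pow_inv by lra.
  apply Rmult_le_reg_r with ((1 + E) ^ 2); [apply pow_lt; lra |].
  rewrite Rmult_assoc, Rinv_l by (apply pow_nonzero; lra).
  (* The difference of the two sides is exactly this product. *)
  assert (0 <= ((1 - s) * E - (1 + s)) * ((1 + s) * E - (1 - s))) by (apply Rmult_le_pos; nra).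
  simpl. nra.
Qed.

Lemma chernoff_base_ge0 (E : R) : 0 <= E -> 0 <= chernoff_base E.
Proof.
  intros HE. unfold chernoff_base, Rdiv.
  apply Rmult_le_pos; [pose proof (sqrt_pos E); lra |].
  left; apply Rinv_0_lt_compat; lra.
Qed.

Lemma chernoff_base_pow_le (s E : R) (n : nat) :
  0 <= s < 1 -> (1 + s) / (1 - s) <= E ->
  chernoff_base E ^ n <= exp (- (INR n * s ^ 2) / 2).
Proof.
  intros Hs HE.
  assert (Hb : 0 <= chernoff_base E ^ n).
  { apply pow_le, chernoff_base_ge0.
    pose proof (one_le_of_ratio_le s E Hs HE). lra. }
  assert (Hsq : (chernoff_base E ^ n) ^ 2 <= exp (- (INR n * s ^ 2) / 2) ^ 2).
  { rewrite <- !pow_mult, Nat.mul_comm, !pow_mult.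
    replace (exp (- (INR n * s ^ 2) / 2) ^ 2) with (exp (- (INR n * s ^ 2)))
      by (rewrite <- exp_mul_INR; f_equal; simpl; field).
    apply Rle_trans with ((1 - s ^ 2) ^ n).
    - apply pow_incr. split; [apply pow2_ge_0 | apply chernoff_base_sqr_le; assumption].
    - apply pow_one_minus_le_exp. nra. }
  pose proof (exp_pos (- (INR n * s ^ 2) / 2)).
  nra.
Qed.

Theorem corollary3 (n : nat) (eps Delta : R) :
  (0 < n)%nat ->
  INR n > 6 * ln 10 ->
  0 < Delta ->
  eps >= 2 * Delta *
    ln ((1 + 2 * sqrt ((3/2) * ln 10 / INR n)) /
        (1 - 2 * sqrt ((3/2) * ln 10 / INR n))) ->
  prob_flip_le_half n eps Delta >= 999/1000.
Proof.
  intros Hn Hlarge HDelta Heps.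
  set (s := 2 * sqrt ((3/2) * ln 10 / INR n)) in Heps.
  assert (Hln10 : 0 < ln 10) by (rewrite <- ln_1; apply ln_increasing; lra).
  assert (HnR : 0 < INR n) by (apply lt_0_INR; exact Hn).
  assert (Hs2 : INR n * s ^ 2 = 6 * ln 10).
  { unfold s. rewrite Rpow_mult_distr, pow2_sqrt; [field; lra |].
    left; apply Rdiv_lt_0_compat; lra. }
  assert (Hs : 0 <= s < 1).
  { split; [unfold s; pose proof (sqrt_pos ((3/2) * ln 10 / INR n)); lra |].
    assert (s ^ 2 < 1) by nra. nra. }
  assert (HE : (1 + s) / (1 - s) <= exp (eps / (2 * Delta))).
  { apply exp_ge_of_ln_le; [apply Rdiv_lt_0_compat; lra |].
    apply Rmult_le_reg_l with (2 * Delta); [lra |].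
    unfold Rdiv at 2. rewrite <- Rmult_assoc, Rinv_r_simpl_m; lra. }
  assert (Htail : chernoff_base (exp (eps / (2 * Delta))) ^ n <= / 10 ^ 3).
  { rewrite <- exp_ln with (x := 10), <- exp_mul_INR, <- exp_Ropp by lra.
    eapply Rle_trans; [apply chernoff_base_pow_le; eassumption |].
    rewrite Hs2. right. f_equal. simpl. field. }
  pose proof (prob_flip_le_half_ge n eps Delta (one_le_of_ratio_le s _ Hs HE)).
  lra.
Qed.
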